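(* Let $\mathcal{A}$ be a class of weakly-archimedean, linearly ordered $FL_{ew}$-algebras such that for every $n\in\omega$ some $\mathbf{A}_n\in\mathcal{A}$ is not $n$-contractive. Let $P=\{\langle \mathtt{v}_1,\mathtt{w}_1\rangle,\dots,\langle\mathtt{v}_m,\mathtt{w}_m\rangle\}$ be an instance of the Post Correspondence Problem in base $s\ge 2$, and let $y,v,w$ be distinct propositional variables. Let $\Gamma_P$ consist of the three formulas (1) $\Box y\leftrightarrow\Diamond y$; (2) $\Box\bigvee_{1\le i\le m}\Big(\big(v\leftrightarrow(\Box v)^{s^{\|\mathtt{v}_i\|}}\cdot y^{\mathtt{v}_i}\big)\wedge\big(w\leftrightarrow(\Box w)^{s^{\|\mathtt{w}_i\|}}\cdot y^{\mathtt{w}_i}\big)\Big)$; (3) $\Box\big(\Box(v\cdot w)\to(\Box v\cdot\Box w)\big)$; and let $\varphi_P=(v\leftrightarrow w)\to\big(y\vee(v\cdot w\to v\cdot w\cdot y)\big)$. Then the following are equivalent: (a) $P$ has a solution; (b) $\Gamma_P\not\vdash_{4\mathcal{K}_{\mathcal{A}}}\Box\varphi_P$; (c) $\Gamma_P\not\vdash_{\omega4\mathcal{K}_{\mathcal{A}}}\Box\varphi_P$.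
   Context: Post Correspondence Problem: an instance is a list $\langle\mathtt{v}_1,\mathtt{w}_1\rangle,\dots,\langle\mathtt{v}_m,\mathtt{w}_m\rangle$ of pairs of numbers written in some base $s\ge2$, without repetitions (for $i\ne j$, $\mathtt{v}_i\ne\mathtt{v}_j$ or $\mathtt{w}_i\ne\mathtt{w}_j$). For numbers $\mathtt{x},\mathtt{y}$ in base $s$, $\|\mathtt{y}\|$ is the number of digits of $\mathtt{y}$ in base $s$ and the concatenation is $\mathtt{xy}=\mathtt{x}\cdot s^{\|\mathtt{y}\|}+\mathtt{y}$. A solution is a sequence of indices $i_1,\dots,i_k$ with $1\le i_j\le m$ such that $\mathtt{v}_{i_1}\cdots\mathtt{v}_{i_k}=\mathtt{w}_{i_1}\cdots\mathtt{w}_{i_k}$ (concatenations). In formulas, $x^n$ denotes the $n$-fold product $x\cdot\ldots\cdot x$ for a natural number $n$ ($x^0=1$), with exponents read as natural numbers. An $FL_{ew}$-algebra is $\mathbf{A}=\langle A;\wedge,\vee,\cdot,\to,0,1\rangle$ with $\langle A;\wedge,\vee,0,1\rangle$ a bounded lattice, $\langle A;\cdot,1\rangle$ a commutative monoid, and $a\cdot b\le c$ iff $a\le b\to c$. $\mathbf{A}$ is $n$-contractive if $a^{n+1}=a^n$ for all $a$; weakly-archimedean if $a\le b^n$ for all $n\in\omega$ implies $ab=a$. Modal formulas use $\wedge,\vee,\cdot,\to,0,1,\Box,\Diamond$; $x\leftrightarrow y:=(x\to y)\cdot(y\to x)$. An $\mathbf{A}$-Kripke model $\langle W,R,e\rangle$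 has $W\ne\emptyset$, $R\subseteq W^2$, $e$ valuing variables at worlds in $A$, extended homomorphically world-wise and with $e(v,\Box\varphi)=\bigwedge_{Rvw}e(w,\varphi)$, $e(v,\Diamond\varphi)=\bigvee_{Rvw}e(w,\varphi)$; safe if these always exist. $4\mathcal{K}_{\mathcal{A}}$: safe models over algebras of $\mathcal{A}$ with transitive $R$; $\omega4\mathcal{K}_{\mathcal{A}}$: the finite ones among them. $\Gamma\vdash_{\mathcal{C}}\varphi$ means: for all $\mathfrak{M}\in\mathcal{C}$ and worlds $v$, if all formulas of $\Gamma$ take value $1$ at $v$ then so does $\varphi$. *)

From Stdlib Require Import List Arith PeanoNat.
Import ListNotations.

Record FLew := {
  car :> Type;
  meet : car -> car -> car;
  join : car -> car -> car;
  mul  : car -> car -> car;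
  imp  : car -> car -> car;
  zero : car;
  one  : car;
  meetC : forall a b, meet a b = meet b a;
  meetA : forall a b c, meet a (meet b c) = meet (meet a b) c;
  joinC : forall a b, join a b = join b a;
  joinA : forall a b c, join a (join b c) = join (join a b) c;
  meet_join_absorb : forall a b, meet a (join a b) = a;
  join_meet_absorb : forall a b, join a (meet a b) = a;
  zero_bottom : forall a, join zero a = a;
  one_top : forall a, meet one a = a;
  mulC : forall a b, mul a b = mul b a;
  mulA : forall a b c, mul a (mul b c) = mul (mul a b) c;
  mul1a : forall a, mul one a = a;
  (* residuation: a*b <= c iff a <= b -> c *)
  residuation : forall a b c,
    meet (mul a b) c = mul a b <-> meet a (imp b c) = a
}.

Definition fl_le (A : FLew) (a b : A) : Prop := meet A a b = a.

Definition fl_pow (A : FLew) (a : A) (n : nat) : A := Nat.iter n (mul A a) (one A).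

Definition linearly_ordered (A : FLew) : Prop :=
  forall a b : A, fl_le A a b \/ fl_le A b a.

Definition n_contractive (A : FLew) (n : nat) : Prop :=
  forall a : A, fl_pow A a (S n) = fl_pow A a n.

Definition weakly_archimedean (A : FLew) : Prop :=
  forall a b : A, (forall n, fl_le A a (fl_pow A b n)) -> mul A a b = a.

Inductive form : Type :=
| FVar : nat -> form
| FAnd : form -> form -> form
| FOr  : form -> form -> form
| FMul : form -> form -> form
| FImp : form -> form -> form
| FBot : form
| FTop : form
| FBox : form -> form
| FDia : form -> form.

Definition fiff (x y : form) : form := FMul (FImp x y) (FImp y x).
Definition fpow (x : form) (n : nat) : form := Nat.iter n (FMul x) FTop.
Definition fbigor (l : list form) : form := fold_right FOr FBot l.

Definition is_inf (A : FLew) (S : A -> Prop) (a : A) : Prop :=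
  (forall b, S b -> fl_le A a b) /\
  (forall c, (forall b, S b -> fl_le A c b) -> fl_le A c a).

Definition is_sup (A : FLew) (S : A -> Prop) (a : A) : Prop :=
  (forall b, S b -> fl_le A b a) /\
  (forall c, (forall b, S b -> fl_le A b c) -> fl_le A a c).

(* [ev] is the (unique) evaluation of all formulas in the A-Kripke model
   <W,R,e>; such an [ev] exists iff the model is safe. *)
Definition is_eval (A : FLew) (W : Type) (R : W -> W -> Prop)
  (e : nat -> W -> A) (ev : W -> form -> A) : Prop :=
  (forall v x, ev v (FVar x) = e x v) /\
  (forall v f g, ev v (FAnd f g) = meet A (ev v f) (ev v g)) /\
  (forall v f g, ev v (FOr f g) = join A (ev v f) (ev v g)) /\
  (forall v f g, ev v (FMul f g) = mul A (ev v f) (ev v g)) /\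
  (forall v f g, ev v (FImp f g) = imp A (ev v f) (ev v g)) /\
  (forall v, ev v FBot = zero A) /\
  (forall v, ev v FTop = one A) /\
  (forall v f, is_inf A (fun a => exists u, R v u /\ a = ev u f) (ev v (FBox f))) /\
  (forall v f, is_sup A (fun a => exists u, R v u /\ a = ev u f) (ev v (FDia f))).

Definition transitive_rel (W : Type) (R : W -> W -> Prop) : Prop :=
  forall a b c, R a b -> R b c -> R a c.

Definition finite_type (W : Type) : Prop := exists l : list W, forall w, In w l.

(* Gamma |-_{4K_K} phi : local consequence over safe transitive models *)
Definition entails_4K (K : FLew -> Prop) (Gamma : list form) (phi : form) : Prop :=
  forall (A : FLew), K A ->
  forall (W : Type) (R : W -> W -> Prop) (e : nat -> W -> A) (ev : W -> form -> A),
    inhabited W -> transitive_rel W R -> is_eval A W R e ev ->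
    forall v : W, (forall psi, In psi Gamma -> ev v psi = one A) -> ev v phi = one A.

Definition entails_w4K (K : FLew -> Prop) (Gamma : list form) (phi : form) : Prop :=
  forall (A : FLew), K A ->
  forall (W : Type) (R : W -> W -> Prop) (e : nat -> W -> A) (ev : W -> form -> A),
    inhabited W -> finite_type W -> transitive_rel W R -> is_eval A W R e ev ->
    forall v : W, (forall psi, In psi Gamma -> ev v psi = one A) -> ev v phi = one A.

(* number of digits of n in base s (>= 2): least k >= 1 with n < s^k *)
Fixpoint ndigits_aux (fuel s n : nat) : nat :=
  match fuel with
  | 0 => 1
  | S f => if n <? s then 1 else S (ndigits_aux f s (n / s))
  end.
Definition ndigits (s n : nat) : nat := ndigits_aux n s n.

(* concatenation x y = x * s^||y|| + y *)
Definition nconcat (s x y : nat) : nat := x * s ^ ndigits s y + y.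
Definition nconcat_list (s : nat) (l : list nat) : nat := fold_left (nconcat s) l 0.

(* P is given as the list [(v_1,w_1); ...; (v_m,w_m)]; index i is 0-based *)
Definition pcp_solution (s : nat) (P : list (nat * nat)) : Prop :=
  exists idx : list nat,
    idx <> [] /\ Forall (fun i => i < length P) idx /\
    nconcat_list s (map (fun i => fst (nth i P (0, 0))) idx) =
    nconcat_list s (map (fun i => snd (nth i P (0, 0))) idx).

Definition gammaP (s : nat) (P : list (nat * nat)) (y v w : nat) : list form :=
  [ fiff (FBox (FVar y)) (FDia (FVar y));
    FBox (fbigor (map (fun p =>
      FAnd (fiff (FVar v) (FMul (fpow (FBox (FVar v)) (s ^ ndigits s (fst p)))
                                (fpow (FVar y) (fst p))))
           (fiff (FVar w) (FMul (fpow (FBox (FVar w)) (s ^ ndigits s (snd p)))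
                                (fpow (FVar y) (snd p))))) P));
    FBox (FImp (FBox (FMul (FVar v) (FVar w))) (FMul (FBox (FVar v)) (FBox (FVar w)))) ].

Definition phiP (y v w : nat) : form :=
  FImp (fiff (FVar v) (FVar w))
       (FOr (FVar y) (FImp (FMul (FVar v) (FVar w))
                           (FMul (FMul (FVar v) (FVar w)) (FVar y)))).

(* Suppose [P] has a solution whose two concatenations both equal [X], and pick [c] in an algebra
   of the class with [c^(2X+1) <> c^(2X)]. On the finite chain whose [k]-th world sees the worlds
   below it and carries the prefix of length [k] of the solution, let [y] be [c] and let [v], [w] be
   [c] raised to the two concatenations of the prefix. Formula (2) holds because concatenation
   [x s^|m| + m] in the exponent is [(c^x)^(s^|m|) c^m]; at the world of the whole solution [phiP]
   reduces to [c^(2X) <= c^(2X+1)], which fails.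
   Conversely, let [phiP] fail at a successor of a root satisfying [Gamma_P]. By (1), [y] is a
   constant [c] on the successors, and weak archimedeanity yields [N] with [vw] not below [c^N] and
   [c^0 > ... > c^(N-1)]. By induction on [M <= N], at every world where [vw] is not below [c^M],
   [v] and [w] are [c] raised to the two concatenations of one nonempty index sequence: by (2) the
   world extends the sequence of a successor realising the infima of [v] and [w], and (3) together
   with the distinctness of the powers forces one successor to realise both. At the failure point
   these exponents are equal, since otherwise [phiP] would hold; so [P] has a solution. *)

From Stdlib Require Import List Arith PeanoNat Lia Classical Wf_nat.
Import ListNotations.

Local Notation "a ⊑ b" := (fl_le _ a b) (at level 70, no associativity).
Local Notation "a ⊗ b" := (mul _ a b) (at level 40, left associativity).
Local Notation "a ⇒ b" := (imp _ a b) (at level 55, right associativity).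
Local Notation "a ^^ n" := (fl_pow _ a n) (at level 30, right associativity).

(** * FL_ew-algebras *)

Section FLewTheory.
Context {A : FLew}.
Implicit Types a b c d t x : A.
Implicit Types T : A -> Prop.

Lemma fl_meet_idem a : meet A a a = a.
Proof. rewrite <- (join_meet_absorb A a a) at 2. apply meet_join_absorb. Qed.

Lemma fl_le_refl a : a ⊑ a.
Proof. apply fl_meet_idem. Qed.

Lemma fl_le_trans a b c : a ⊑ b -> b ⊑ c -> a ⊑ c.
Proof. unfold fl_le; intros Hab Hbc. rewrite <- Hab at 1. rewrite <- meetA, Hbc. exact Hab. Qed.

Lemma fl_le_antisym a b : a ⊑ b -> b ⊑ a -> a = b.
Proof. unfold fl_le; intros Hab Hba. rewrite <- Hab, meetC. exact Hba. Qed.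

Lemma fl_le_meet_l a b : meet A a b ⊑ a.
Proof. unfold fl_le. rewrite meetC, meetA, fl_meet_idem. reflexivity. Qed.

Lemma fl_le_meet_r a b : meet A a b ⊑ b.
Proof. unfold fl_le. rewrite <- meetA, fl_meet_idem. reflexivity. Qed.

Lemma fl_meet_glb a b c : c ⊑ a -> c ⊑ b -> c ⊑ meet A a b.
Proof. unfold fl_le; intros Ha Hb. rewrite meetA, Ha, Hb. reflexivity. Qed.

Lemma fl_le_one a : a ⊑ one A.
Proof. unfold fl_le. rewrite meetC. apply one_top. Qed.

Lemma fl_zero_le a : zero A ⊑ a.
Proof. unfold fl_le. rewrite <- (zero_bottom A a) at 1. apply meet_join_absorb. Qed.

Lemma fl_le_join_eq a b : a ⊑ b <-> join A a b = b.
Proof.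
  unfold fl_le; split; intro H.
  - rewrite <- H, joinC, meetC. apply join_meet_absorb.
  - rewrite <- H. apply meet_join_absorb.
Qed.

Lemma fl_le_join_l a b : a ⊑ join A a b.
Proof. apply meet_join_absorb. Qed.

Lemma fl_le_join_r a b : b ⊑ join A a b.
Proof. rewrite joinC. apply fl_le_join_l. Qed.

Lemma fl_join_lub a b c : a ⊑ c -> b ⊑ c -> join A a b ⊑ c.
Proof. rewrite !fl_le_join_eq. intros Ha Hb. rewrite <- joinA, Hb, Ha. reflexivity. Qed.

Lemma fl_one_le_eq a : one A ⊑ a -> a = one A.
Proof. intro H. apply fl_le_antisym; [apply fl_le_one | exact H]. Qed.

Lemma fl_meet_eq_one a b : meet A a b = one A -> a = one A /\ b = one A.
Proof.
  intro E. split; apply fl_one_le_eq; rewrite <- E; [apply fl_le_meet_l | apply fl_le_meet_r].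
Qed.

Lemma fl_join_eq_one a b :
  linearly_ordered A -> join A a b = one A -> a = one A \/ b = one A.
Proof.
  intros Hlin E. destruct (Hlin a b) as [H | H]; apply fl_le_join_eq in H.
  - right. congruence.
  - left. rewrite joinC in H. congruence.
Qed.

Lemma fl_le_imp a b c : a ⊗ b ⊑ c -> a ⊑ b ⇒ c.
Proof. exact (proj1 (residuation A a b c)). Qed.

Lemma fl_imp_le a b c : a ⊑ b ⇒ c -> a ⊗ b ⊑ c.
Proof. exact (proj2 (residuation A a b c)). Qed.

Lemma fl_mul1r a : a ⊗ one A = a.
Proof. rewrite mulC. apply mul1a. Qed.

Lemma fl_mul_monol a a' b : a ⊑ a' -> a ⊗ b ⊑ a' ⊗ b.
Proof.
  intro H. apply fl_imp_le, (fl_le_trans _ _ _ H), fl_le_imp, fl_le_refl.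
Qed.

Lemma fl_mul_monor a b b' : b ⊑ b' -> a ⊗ b ⊑ a ⊗ b'.
Proof. rewrite (mulC A a b), (mulC A a b'). apply fl_mul_monol. Qed.

Lemma fl_mul_mono a a' b b' : a ⊑ a' -> b ⊑ b' -> a ⊗ b ⊑ a' ⊗ b'.
Proof.
  intros Ha Hb. apply (fl_le_trans _ (a' ⊗ b)); [apply fl_mul_monol | apply fl_mul_monor]; assumption.
Qed.

Lemma fl_mul_le_l a b : a ⊗ b ⊑ a.
Proof. rewrite <- (fl_mul1r a) at 2. apply fl_mul_monor, fl_le_one. Qed.

Lemma fl_mul_le_r a b : a ⊗ b ⊑ b.
Proof. rewrite mulC. apply fl_mul_le_l. Qed.

Lemma fl_mul_eq_one a b : a ⊗ b = one A -> a = one A.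
Proof. intro H. apply fl_one_le_eq. rewrite <- H. apply fl_mul_le_l. Qed.

Lemma fl_mulACA a b c d : a ⊗ b ⊗ (c ⊗ d) = a ⊗ c ⊗ (b ⊗ d).
Proof. rewrite <- !mulA. f_equal. rewrite !mulA. f_equal. apply mulC. Qed.

Lemma fl_modus_ponens a b : (a ⇒ b) ⊗ a ⊑ b.
Proof. apply fl_imp_le, fl_le_refl. Qed.

Lemma fl_imp_eq_one a b : a ⇒ b = one A <-> a ⊑ b.
Proof.
  split; intro H.
  - rewrite <- (mul1a A a), <- H. apply fl_modus_ponens.
  - apply fl_one_le_eq, fl_le_imp. rewrite mul1a. exact H.
Qed.

Lemma fl_imp1l a : one A ⇒ a = a.
Proof.
  apply fl_le_antisym.
  - rewrite <- (fl_mul1r (one A ⇒ a)). apply fl_modus_ponens.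
  - apply fl_le_imp. rewrite fl_mul1r. apply fl_le_refl.
Qed.

Lemma fl_biimp_eq_one a b : (a ⇒ b) ⊗ (b ⇒ a) = one A <-> a = b.
Proof.
  split.
  - intro H. apply fl_le_antisym; apply fl_imp_eq_one.
    + exact (fl_mul_eq_one _ _ H).
    + rewrite mulC in H. exact (fl_mul_eq_one _ _ H).
  - intros <-. rewrite (proj2 (fl_imp_eq_one a a) (fl_le_refl a)). apply mul1a.
Qed.

Lemma fl_pow_add c m n : c ^^ (m + n) = c ^^ m ⊗ c ^^ n.
Proof.
  induction m as [|m IH]; simpl.
  - symmetry. apply mul1a.
  - change (c ⊗ c ^^ (m + n) = c ⊗ c ^^ m ⊗ c ^^ n). rewrite IH. apply mulA.
Qed.

Lemma fl_pow_mul c m n : c ^^ (m * n) = (c ^^ m) ^^ n.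
Proof.
  induction n as [|n IH].
  - rewrite Nat.mul_0_r. reflexivity.
  - rewrite Nat.mul_succ_r, fl_pow_add, IH. apply mulC.
Qed.

Lemma fl_pow1 c : c ^^ 1 = c.
Proof. apply fl_mul1r. Qed.

Lemma fl_pow_one n : one A ^^ n = one A.
Proof.
  induction n as [|n IH]; [reflexivity|].
  change (one A ⊗ one A ^^ n = one A). rewrite IH. apply mul1a.
Qed.

Lemma fl_pow_antitone c m n : m <= n -> c ^^ n ⊑ c ^^ m.
Proof. intro H. replace n with (m + (n - m)) by lia. rewrite fl_pow_add. apply fl_mul_le_l. Qed.

Lemma fl_pow_le_base c k : 1 <= k -> c ^^ k ⊑ c.
Proof. intro H. rewrite <- (fl_pow1 c) at 2. apply fl_pow_antitone, H. Qed.

Lemma fl_pow_stable c i j : c ^^ S i = c ^^ i -> i <= j -> c ^^ j = c ^^ i.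
Proof.
  intros Hi Hij. replace j with (i + (j - i)) by lia.
  induction (j - i) as [|d IH]; [now rewrite Nat.add_0_r|].
  replace (i + S d) with (S i + d) by lia. rewrite fl_pow_add, Hi, <- fl_pow_add. exact IH.
Qed.

Lemma fl_pow_nconcat c (s k m : nat) :
  (c ^^ k) ^^ s ^ ndigits s m ⊗ c ^^ m = c ^^ nconcat s k m.
Proof. unfold nconcat. rewrite fl_pow_add, fl_pow_mul. reflexivity. Qed.


Lemma is_inf_lb T x a : is_inf A T x -> T a -> x ⊑ a.
Proof. intros [H _]. apply H. Qed.

Lemma is_inf_glb T x a : is_inf A T x -> (forall b, T b -> a ⊑ b) -> a ⊑ x.
Proof. intros [_ H]. apply H. Qed.

Lemma is_sup_ub T x a : is_sup A T x -> T a -> a ⊑ x.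
Proof. intros [H _]. apply H. Qed.

Lemma is_sup_lub T x a : is_sup A T x -> (forall b, T b -> b ⊑ a) -> x ⊑ a.
Proof. intros [_ H]. apply H. Qed.

Lemma is_inf_ext T T' x : (forall z, T z <-> T' z) -> is_inf A T x -> is_inf A T' x.
Proof. intros E [H1 H2]. split; intros; [apply H1 | apply H2]; firstorder. Qed.

Lemma is_sup_ext T T' x : (forall z, T z <-> T' z) -> is_sup A T x -> is_sup A T' x.
Proof. intros E [H1 H2]. split; intros; [apply H1 | apply H2]; firstorder. Qed.

Lemma is_inf_attained T x a : is_inf A T x -> T a -> (forall b, T b -> a ⊑ b) -> x = a.
Proof.
  intros H Ha Hlb. apply fl_le_antisym; [exact (is_inf_lb _ _ _ H Ha) | exact (is_inf_glb _ _ _ H Hlb)].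
Qed.

Lemma is_sup_attained T x a : is_sup A T x -> T a -> (forall b, T b -> b ⊑ a) -> x = a.
Proof.
  intros H Ha Hub. apply fl_le_antisym; [exact (is_sup_lub _ _ _ H Hub) | exact (is_sup_ub _ _ _ H Ha)].
Qed.

Lemma is_inf_eq_one T x : is_inf A T x -> (forall b, T b -> b = one A) -> x = one A.
Proof.
  intros H H1. apply fl_one_le_eq, (is_inf_glb _ _ _ H). intros b Hb. rewrite (H1 b Hb). apply fl_le_refl.
Qed.

Lemma is_inf_sup_const T x a : is_inf A T x -> is_sup A T x -> T a -> a = x.
Proof. intros Hi Hs Ha. apply fl_le_antisym; [apply (is_sup_ub T) | apply (is_inf_lb T)]; assumption. Qed.

Lemma fold_meet_is_inf {X : Type} (g : X -> A) (l : list X) :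
  is_inf A (fun z => exists j, In j l /\ z = g j) (fold_right (meet A) (one A) (map g l)).
Proof.
  induction l as [|j l IH]; split; simpl.
  - intros b (j & [] & _).
  - intros; apply fl_le_one.
  - intros b (j' & [<- | Hin] & ->); [apply fl_le_meet_l|].
    apply (fl_le_trans _ _ _ (fl_le_meet_r _ _)). apply (is_inf_lb _ _ _ IH). eauto.
  - intros a Ha. apply fl_meet_glb; [apply Ha; eauto|].
    apply (is_inf_glb _ _ _ IH). intros b (j' & Hj & ->). apply Ha. eauto.
Qed.

Lemma fold_join_is_sup {X : Type} (g : X -> A) (l : list X) :
  is_sup A (fun z => exists j, In j l /\ z = g j) (fold_right (join A) (zero A) (map g l)).
Proof.
  induction l as [|j l IH]; split; simpl.
  - intros b (j & [] & _).
  - intros; apply fl_zero_le.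
  - intros b (j' & [<- | Hin] & ->); [apply fl_le_join_l|].
    refine (fl_le_trans _ _ _ _ (fl_le_join_r _ _)). apply (is_sup_ub _ _ _ IH). eauto.
  - intros a Ha. apply fl_join_lub; [apply Ha; eauto|].
    apply (is_sup_lub _ _ _ IH). intros b (j' & Hj & ->). apply Ha. eauto.
Qed.

Lemma nat_bounded_greatest (E : nat -> Prop) (M : nat) :
  (exists k, E k) -> (forall k, E k -> k < M) -> exists k, E k /\ forall k', E k' -> k' <= k.
Proof.
  induction M as [|M IH]; intros [k Hk] Hb; [specialize (Hb k Hk); lia|].
  destruct (classic (E M)) as [HM | HM].
  - exists M. split; [exact HM|]. intros k' Hk'. specialize (Hb k' Hk'). lia.
  - apply IH; [eauto|]. intros k' Hk'. specialize (Hb k' Hk').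
    assert (k' <> M) by (intros ->; contradiction). lia.
Qed.

Lemma is_inf_pow_greatest c (E : nat -> Prop) (M : nat) T x :
  (exists k, E k) -> (forall k, E k -> k < M) ->
  (forall z, T z <-> exists k, E k /\ z = c ^^ k) -> is_inf A T x ->
  exists k, E k /\ (forall k', E k' -> k' <= k) /\ x = c ^^ k.
Proof.
  intros Hne Hb HT Hinf. destruct (nat_bounded_greatest E M Hne Hb) as (k & Hk & Hmax).
  exists k. repeat split; [exact Hk | exact Hmax |].
  apply (is_inf_attained T); [exact Hinf | apply HT; eauto |].
  intros b Hb'. apply HT in Hb' as (k' & Hk' & ->). apply fl_pow_antitone, Hmax, Hk'.
Qed.

Definition phi_value a b c : A := (a ⇒ b) ⊗ (b ⇒ a) ⇒ join A c (a ⊗ b ⇒ a ⊗ b ⊗ c).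

Lemma phi_value_comm a b c : phi_value a b c = phi_value b a c.
Proof. unfold phi_value. rewrite (mulC A (a ⇒ b)), (mulC A a b). reflexivity. Qed.

Lemma phi_value_one_of_le a b c : a ⊗ b ⊑ a ⊗ b ⊗ c -> phi_value a b c = one A.
Proof.
  intro H. apply fl_imp_eq_one. refine (fl_le_trans _ _ _ _ (fl_le_join_r _ _)).
  apply fl_le_imp. exact (fl_le_trans _ _ _ (fl_mul_le_r _ _) H).
Qed.

Lemma phi_value_one_of_factor a b c t : b = a ⊗ t -> t ⊑ c -> phi_value a b c = one A.
Proof.
  intros Hb Ht. apply fl_imp_eq_one. refine (fl_le_trans _ _ _ _ (fl_le_join_r _ _)).
  apply fl_le_imp. refine (fl_le_trans _ _ _ (fl_mul_monol _ _ _ (fl_mul_le_l _ _)) _).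
  rewrite mulA. refine (fl_le_trans _ _ _ (fl_mul_monol _ _ _ (fl_modus_ponens a b)) _).
  rewrite Hb at 2. rewrite mulA, (mulC A b a). apply fl_mul_monor, Ht.
Qed.

Lemma phi_value_pow_lt c X Y : X < Y -> phi_value (c ^^ X) (c ^^ Y) c = one A.
Proof.
  intro H. apply (phi_value_one_of_factor _ _ _ (c ^^ (Y - X))).
  - rewrite <- fl_pow_add. f_equal. lia.
  - apply fl_pow_le_base. lia.
Qed.

Lemma phi_value_pow_neq c X Y : X <> Y -> phi_value (c ^^ X) (c ^^ Y) c = one A.
Proof.
  intro H. destruct (Nat.lt_gt_cases X Y) as [[Hlt | Hgt] _]; [exact H | |].
  - apply phi_value_pow_lt, Hlt.
  - rewrite phi_value_comm. apply phi_value_pow_lt, Hgt.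
Qed.

Lemma phi_value_pow_diag c X :
  linearly_ordered A -> phi_value (c ^^ X) (c ^^ X) c = one A -> c ^^ S (X + X) = c ^^ (X + X).
Proof.
  intros Hlin H. unfold phi_value in H.
  rewrite (proj2 (fl_biimp_eq_one _ _) eq_refl), fl_imp1l, <- fl_pow_add in H.
  destruct (fl_join_eq_one _ _ Hlin H) as [-> | Hle].
  - rewrite !fl_pow_one. reflexivity.
  - apply fl_imp_eq_one in Hle. apply fl_le_antisym; [apply fl_mul_le_r|].
    rewrite mulC in Hle. exact Hle.
Qed.

End FLewTheory.

Definition pcp_v (P : list (nat * nat)) (i : nat) : nat := fst (nth i P (0, 0)).
Definition pcp_w (P : list (nat * nat)) (i : nat) : nat := snd (nth i P (0, 0)).
Definition pcp_top (s : nat) (P : list (nat * nat)) (idx : list nat) : nat :=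
  nconcat_list s (map (pcp_v P) idx).
Definition pcp_bot (s : nat) (P : list (nat * nat)) (idx : list nat) : nat :=
  nconcat_list s (map (pcp_w P) idx).

Lemma nconcat_list_snoc s l m : nconcat_list s (l ++ [m]) = nconcat s (nconcat_list s l) m.
Proof. unfold nconcat_list. rewrite fold_left_app. reflexivity. Qed.

Lemma pcp_top_snoc s P idx i : pcp_top s P (idx ++ [i]) = nconcat s (pcp_top s P idx) (pcp_v P i).
Proof. unfold pcp_top. rewrite map_app. apply nconcat_list_snoc. Qed.

Lemma pcp_bot_snoc s P idx i : pcp_bot s P (idx ++ [i]) = nconcat s (pcp_bot s P idx) (pcp_w P i).
Proof. unfold pcp_bot. rewrite map_app. apply nconcat_list_snoc. Qed.

Lemma fold_nconcat_ge s l x : 1 <= s -> x <= fold_left (nconcat s) l x.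
Proof.
  intro Hs. revert x. induction l as [|m l IH]; intro x; simpl; [lia|].
  refine (Nat.le_trans _ _ _ _ (IH _)). unfold nconcat.
  pose proof (Nat.pow_nonzero s (ndigits s m)). nia.
Qed.

Lemma nconcat_list_firstn_mono s l j j' :
  1 <= s -> j <= j' -> nconcat_list s (firstn j l) <= nconcat_list s (firstn j' l).
Proof.
  intros Hs Hj. rewrite <- (firstn_skipn j (firstn j' l)), firstn_firstn, Nat.min_l by exact Hj.
  unfold nconcat_list. rewrite fold_left_app. apply fold_nconcat_ge, Hs.
Qed.

Lemma pcp_top_firstn_mono s P idx j j' :
  1 <= s -> j <= j' -> pcp_top s P (firstn j idx) <= pcp_top s P (firstn j' idx).
Proof. unfold pcp_top. rewrite <- !firstn_map. apply nconcat_list_firstn_mono. Qed.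

Lemma pcp_bot_firstn_mono s P idx j j' :
  1 <= s -> j <= j' -> pcp_bot s P (firstn j idx) <= pcp_bot s P (firstn j' idx).
Proof. unfold pcp_bot. rewrite <- !firstn_map. apply nconcat_list_firstn_mono. Qed.

Lemma pcp_solution_of_empty_pair s P i :
  i < length P -> pcp_v P i + pcp_w P i = 0 -> pcp_solution s P.
Proof.
  intros Hi H0. exists [i]. split; [discriminate|]. split; [constructor; auto|].
  change (nconcat s 0 (pcp_v P i) = nconcat s 0 (pcp_w P i)). unfold nconcat. lia.
Qed.

Lemma firstn_S_snoc {X : Type} (l : list X) n d :
  n < length l -> firstn (S n) l = firstn n l ++ [nth n l d].
Proof.
  revert n. induction l as [|a l IH]; intros n H; simpl in H; [lia|].
  destruct n; [reflexivity|]. rewrite !firstn_cons, IH by lia. reflexivity.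
Qed.

Section Evaluation.
Context {A : FLew} {W : Type} {R : W -> W -> Prop} {e : nat -> W -> A} {ev : W -> form -> A}.
Hypothesis Hev : is_eval A W R e ev.

Lemma ev_and u f g : ev u (FAnd f g) = meet A (ev u f) (ev u g).
Proof. apply Hev. Qed.

Lemma ev_or u f g : ev u (FOr f g) = join A (ev u f) (ev u g).
Proof. apply Hev. Qed.

Lemma ev_mul u f g : ev u (FMul f g) = ev u f ⊗ ev u g.
Proof. apply Hev. Qed.

Lemma ev_imp u f g : ev u (FImp f g) = ev u f ⇒ ev u g.
Proof. apply Hev. Qed.

Lemma ev_bot u : ev u FBot = zero A.
Proof. apply Hev. Qed.

Lemma ev_top u : ev u FTop = one A.
Proof. apply Hev. Qed.

Lemma ev_box u f : is_inf A (fun z => exists u', R u u' /\ z = ev u' f) (ev u (FBox f)).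
Proof. apply Hev. Qed.

Lemma ev_dia u f : is_sup A (fun z => exists u', R u u' /\ z = ev u' f) (ev u (FDia f)).
Proof. apply Hev. Qed.

Lemma ev_fpow u f n : ev u (fpow f n) = ev u f ^^ n.
Proof.
  induction n as [|n IH]; [apply ev_top|].
  simpl. rewrite ev_mul, IH. reflexivity.
Qed.

Lemma ev_fiff_eq_one u f g : ev u (fiff f g) = one A <-> ev u f = ev u g.
Proof. unfold fiff. rewrite ev_mul, !ev_imp. apply fl_biimp_eq_one. Qed.

Lemma ev_box_eq_one u f : (forall u', R u u' -> ev u' f = one A) -> ev u (FBox f) = one A.
Proof. intro H. apply (is_inf_eq_one _ _ (ev_box u f)). intros b (u' & Hr & ->). auto. Qed.

Lemma ev_box_eq_one_succ u u' f : ev u (FBox f) = one A -> R u u' -> ev u' f = one A.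
Proof. intros H Hr. apply fl_one_le_eq. rewrite <- H. apply (is_inf_lb _ _ _ (ev_box u f)). eauto. Qed.

Lemma ev_fbigor_eq_one u l :
  linearly_ordered A -> zero A <> one A -> ev u (fbigor l) = one A -> exists f, In f l /\ ev u f = one A.
Proof.
  intros Hlin Hnt. induction l as [|f l IH]; simpl; intro E.
  - rewrite ev_bot in E. contradiction.
  - rewrite ev_or in E. destruct (fl_join_eq_one _ _ Hlin E) as [Ef | El]; [eauto|].
    destruct (IH El) as (g & Hg & Eg). eauto.
Qed.

Lemma ev_fbigor_of_one u l f : In f l -> ev u f = one A -> ev u (fbigor l) = one A.
Proof.
  induction l as [|g l IH]; simpl; intros Hin E; [contradiction|].
  rewrite ev_or. apply fl_one_le_eq. destruct Hin as [-> | Hin].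
  - rewrite <- E. apply fl_le_join_l.
  - rewrite <- (IH Hin E). apply fl_le_join_r.
Qed.

Lemma ev_phiP u y v w :
  ev u (phiP y v w) = phi_value (ev u (FVar v)) (ev u (FVar w)) (ev u (FVar y)).
Proof. unfold phiP, fiff. rewrite ev_imp, ev_or, !ev_mul, !ev_imp, !ev_mul. reflexivity. Qed.

Section GammaP.
Context (r : W) (s : nat) (P : list (nat * nat)) (y v w : nat).
Hypothesis HG : forall psi, In psi (gammaP s P y v w) -> ev r psi = one A.

Lemma gammaP_y_const u : R r u -> ev u (FVar y) = ev r (FBox (FVar y)).
Proof.
  intro Hr. pose proof (HG _ (or_introl eq_refl)) as G1. apply ev_fiff_eq_one in G1.
  apply (is_inf_sup_const _ _ _ (ev_box r (FVar y))); [rewrite G1; apply ev_dia | eauto].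
Qed.

Lemma gammaP_step u :
  linearly_ordered A -> zero A <> one A -> R r u ->
  exists i, i < length P /\
    ev u (FVar v) = ev u (FBox (FVar v)) ^^ s ^ ndigits s (pcp_v P i) ⊗ ev u (FVar y) ^^ pcp_v P i /\
    ev u (FVar w) = ev u (FBox (FVar w)) ^^ s ^ ndigits s (pcp_w P i) ⊗ ev u (FVar y) ^^ pcp_w P i.
Proof.
  intros Hlin Hnt Hr.
  pose proof (ev_box_eq_one_succ _ _ _ (HG _ (or_intror (or_introl eq_refl))) Hr) as G2.
  destruct (ev_fbigor_eq_one _ _ Hlin Hnt G2) as (f & Hf & Ef).
  apply in_map_iff in Hf as (p & <- & Hp). destruct (In_nth P p (0, 0) Hp) as (i & Hi & <-).
  rewrite ev_and in Ef. apply fl_meet_eq_one in Ef as [Ev Ew].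
  rewrite ev_fiff_eq_one, ev_mul, !ev_fpow in Ev, Ew. exists i. auto.
Qed.

Lemma gammaP_box_mul u :
  R r u -> ev u (FBox (FMul (FVar v) (FVar w))) ⊑ ev u (FBox (FVar v)) ⊗ ev u (FBox (FVar w)).
Proof.
  intro Hr.
  pose proof (ev_box_eq_one_succ _ _ _ (HG _ (or_intror (or_intror (or_introl eq_refl)))) Hr) as G3.
  rewrite ev_imp, ev_mul in G3. apply fl_imp_eq_one, G3.
Qed.

End GammaP.
End Evaluation.

(** * Finite chain countermodels *)

Section FiniteModels.
Context {A : FLew} {W : Type} (enum : list W) (Rb : W -> W -> bool) (e : nat -> W -> A).

Fixpoint fin_eval (f : form) (u : W) : A :=
  match f with
  | FVar x => e x u
  | FAnd f g => meet A (fin_eval f u) (fin_eval g u)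
  | FOr f g => join A (fin_eval f u) (fin_eval g u)
  | FMul f g => fin_eval f u ⊗ fin_eval g u
  | FImp f g => fin_eval f u ⇒ fin_eval g u
  | FBot => zero A
  | FTop => one A
  | FBox f => fold_right (meet A) (one A) (map (fin_eval f) (filter (Rb u) enum))
  | FDia f => fold_right (join A) (zero A) (map (fin_eval f) (filter (Rb u) enum))
  end.

Lemma fin_eval_is_eval :
  (forall u, In u enum) -> is_eval A W (fun u u' => Rb u u' = true) e (fun u f => fin_eval f u).
Proof.
  intro Henum.
  assert (Hsucc : forall u f z, (exists u', In u' (filter (Rb u) enum) /\ z = fin_eval f u') <->
                                (exists u', Rb u u' = true /\ z = fin_eval f u')).
  { intros u f z. split; intros (u' & H & ->); exists u'; rewrite filter_In in *; firstorder. }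
  do 7 (split; [intros; reflexivity|]). split.
  - intros u f. eapply is_inf_ext; [|apply fold_meet_is_inf]. apply Hsucc.
  - intros u f. eapply is_sup_ext; [|apply fold_join_is_sup]. apply Hsucc.
Qed.

End FiniteModels.

Definition chain (L : nat) : Type := {k : nat | k <= S L}.
Definition chain_pt (L k : nat) : chain L := exist _ (Nat.min k (S L)) (Nat.le_min_r k (S L)).
Definition chain_rel (L : nat) (x z : chain L) : bool :=
  (1 <=? proj1_sig z) && (proj1_sig z <? proj1_sig x).
Definition chain_enum (L : nat) : list (chain L) := map (chain_pt L) (seq 0 (S (S L))).

Lemma chain_pt_val L k : k <= S L -> proj1_sig (chain_pt L k) = k.
Proof. simpl. lia. Qed.

Lemma chain_enum_complete L (x : chain L) : In x (chain_enum L).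
Proof.
  destruct x as [k Hk]. apply in_map_iff. exists k. split; [|apply in_seq; lia].
  unfold chain_pt. generalize (Nat.le_min_r k (S L)).
  replace (Nat.min k (S L)) with k by lia. intro H. f_equal. apply le_unique.
Qed.

Lemma chain_rel_spec L x z : chain_rel L x z = true <-> 1 <= proj1_sig z < proj1_sig x.
Proof. unfold chain_rel. rewrite Bool.andb_true_iff, Nat.leb_le, Nat.ltb_lt. reflexivity. Qed.

Lemma chain_rel_trans L : transitive_rel (chain L) (fun x z => chain_rel L x z = true).
Proof. intros x z t. rewrite !chain_rel_spec. lia. Qed.

Lemma chain_finite L : finite_type (chain L).
Proof. exists (chain_enum L). apply chain_enum_complete. Qed.

Lemma chain_box {A : FLew} L (e : nat -> chain L -> A) (f : form) (g : nat -> A) :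
  (forall u, fin_eval (chain_enum L) (chain_rel L) e f u = g (proj1_sig u)) ->
  (forall i j, i <= j -> g j ⊑ g i) -> g 0 = one A ->
  forall u, 1 <= proj1_sig u ->
  fin_eval (chain_enum L) (chain_rel L) e (FBox f) u = g (pred (proj1_sig u)).
Proof.
  intros Hf Hg Hg0 u Hu.
  pose proof (ev_box (fin_eval_is_eval _ (chain_rel L) e (chain_enum_complete L)) u f) as Hinf.
  cbv beta in Hinf.
  pose proof (proj2_sig u) as HuL. simpl in HuL.
  destruct (Nat.eq_dec (proj1_sig u) 1) as [E1 | E1].
  - rewrite E1. cbn [pred]. rewrite Hg0. apply (is_inf_eq_one _ _ Hinf).
    intros b (u' & Hr & _). apply chain_rel_spec in Hr. lia.
  - apply (is_inf_attained _ _ _ Hinf).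
    + exists (chain_pt L (pred (proj1_sig u))).
      rewrite chain_rel_spec, Hf, chain_pt_val by lia. split; [lia | reflexivity].
    + intros b (u' & Hr & ->). rewrite Hf. apply chain_rel_spec in Hr. apply Hg. lia.
Qed.

Section Countermodel.
Context {A : FLew} (c : A) (s : nat) (P : list (nat * nat)) (idx : list nat) (y v w : nat).

(* World [k], [1 <= k <= length idx], carries the prefix of [idx] of length [k]; the root is
   [S (length idx)] and world [0] is an unreachable dummy. *)
Definition cm_val (x : nat) (u : chain (length idx)) : A :=
  if x =? y then c
  else if x =? v then c ^^ pcp_top s P (firstn (proj1_sig u) idx)
  else if x =? w then c ^^ pcp_bot s P (firstn (proj1_sig u) idx)
  else one A.

Definition cm_eval (u : chain (length idx)) (f : form) : A :=
  fin_eval (chain_enum _) (chain_rel _) cm_val f u.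

Lemma cm_is_eval :
  is_eval A (chain (length idx)) (fun x z => chain_rel _ x z = true) cm_val cm_eval.
Proof. apply fin_eval_is_eval, chain_enum_complete. Qed.

Hypotheses (Hyv : y <> v) (Hyw : y <> w) (Hvw : v <> w).

Lemma cm_y u : cm_eval u (FVar y) = c.
Proof. unfold cm_eval, cm_val; simpl. rewrite Nat.eqb_refl. reflexivity. Qed.

Lemma cm_v u : cm_eval u (FVar v) = c ^^ pcp_top s P (firstn (proj1_sig u) idx).
Proof.
  unfold cm_eval, cm_val; simpl. rewrite (proj2 (Nat.eqb_neq v y)), Nat.eqb_refl by auto.
  reflexivity.
Qed.

Lemma cm_w u : cm_eval u (FVar w) = c ^^ pcp_bot s P (firstn (proj1_sig u) idx).
Proof.
  unfold cm_eval, cm_val; simpl.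
  rewrite (proj2 (Nat.eqb_neq w y)), (proj2 (Nat.eqb_neq w v)), Nat.eqb_refl by auto.
  reflexivity.
Qed.

Lemma cm_phiP :
  cm_eval (chain_pt _ (length idx)) (phiP y v w) = phi_value (c ^^ pcp_top s P idx) (c ^^ pcp_bot s P idx) c.
Proof.
  rewrite (ev_phiP cm_is_eval), cm_v, cm_w, cm_y, chain_pt_val, firstn_all by lia. reflexivity.
Qed.

Hypothesis Hs : 1 <= s.

Lemma cm_box_v u :
  1 <= proj1_sig u -> cm_eval u (FBox (FVar v)) = c ^^ pcp_top s P (firstn (pred (proj1_sig u)) idx).
Proof.
  unfold cm_eval. apply chain_box with (g := fun k => c ^^ pcp_top s P (firstn k idx));
    [exact cm_v | | reflexivity].
  intros i j Hij. apply fl_pow_antitone, pcp_top_firstn_mono; assumption.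
Qed.

Lemma cm_box_w u :
  1 <= proj1_sig u -> cm_eval u (FBox (FVar w)) = c ^^ pcp_bot s P (firstn (pred (proj1_sig u)) idx).
Proof.
  unfold cm_eval. apply chain_box with (g := fun k => c ^^ pcp_bot s P (firstn k idx));
    [exact cm_w | | reflexivity].
  intros i j Hij. apply fl_pow_antitone, pcp_bot_firstn_mono; assumption.
Qed.

Lemma cm_box_vw u :
  1 <= proj1_sig u ->
  cm_eval u (FBox (FMul (FVar v) (FVar w))) = cm_eval u (FBox (FVar v)) ⊗ cm_eval u (FBox (FVar w)).
Proof.
  intro Hu. rewrite cm_box_v, cm_box_w by exact Hu. revert u Hu. unfold cm_eval.
  apply chain_box with
    (g := fun k => c ^^ pcp_top s P (firstn k idx) ⊗ c ^^ pcp_bot s P (firstn k idx)).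
  - intro u. fold (cm_eval u (FMul (FVar v) (FVar w))).
    rewrite (ev_mul cm_is_eval), cm_v, cm_w. reflexivity.
  - intros i j Hij.
    apply fl_mul_mono; apply fl_pow_antitone; [apply pcp_top_firstn_mono | apply pcp_bot_firstn_mono];
      assumption.
  - apply mul1a.
Qed.

Hypothesis Hidx : Forall (fun i => i < length P) idx.
Hypothesis Hne : idx <> [].

Lemma cm_gammaP psi :
  In psi (gammaP s P y v w) -> cm_eval (chain_pt _ (S (length idx))) psi = one A.
Proof.
  assert (HL : 1 <= length idx)
    by (destruct (length idx) eqn:E; [apply length_zero_iff_nil in E; contradiction | lia]).
  set (root := chain_pt _ (S (length idx))).
  assert (Hroot : forall u, chain_rel _ root u = true <-> 1 <= proj1_sig u <= length idx).
  { intro u. rewrite chain_rel_spec. unfold root. rewrite chain_pt_val by lia. lia. }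
  pose proof cm_is_eval as Hev.
  intros [<- | [<- | [<- | []]]].
  - apply (ev_fiff_eq_one Hev). set (top := chain_pt (length idx) (length idx)).
    assert (Htop : chain_rel (length idx) root top = true)
      by (apply Hroot; unfold top; rewrite chain_pt_val; lia).
    transitivity c.
    + apply (is_inf_attained _ _ _ (ev_box Hev _ _)); [exists top; rewrite cm_y; auto|].
      intros b (u & _ & ->). rewrite cm_y. apply fl_le_refl.
    + symmetry. apply (is_sup_attained _ _ _ (ev_dia Hev _ _)); [exists top; rewrite cm_y; auto|].
      intros b (u & _ & ->). rewrite cm_y. apply fl_le_refl.
  - apply (ev_box_eq_one Hev). intros u Hu. apply Hroot in Hu.
    set (k := proj1_sig u) in *. set (i := nth (pred k) idx 0).
    assert (Hi : i < length P) by (rewrite Forall_forall in Hidx; apply Hidx, nth_In; lia).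
    assert (Hk : firstn k idx = firstn (pred k) idx ++ [i]).
    { replace k with (S (pred k)) at 1 by lia. apply firstn_S_snoc. lia. }
    eapply (ev_fbigor_of_one Hev).
    { apply in_map_iff. exists (nth i P (0, 0)). split; [reflexivity | apply nth_In, Hi]. }
    rewrite (ev_and Hev), !(proj2 (ev_fiff_eq_one Hev _ _ _)); [apply one_top | |];
      rewrite (ev_mul Hev), !(ev_fpow Hev), cm_y.
    + rewrite cm_w, cm_box_w by lia. fold k. rewrite Hk, pcp_bot_snoc. symmetry. apply fl_pow_nconcat.
    + rewrite cm_v, cm_box_v by lia. fold k. rewrite Hk, pcp_top_snoc. symmetry. apply fl_pow_nconcat.
  - apply (ev_box_eq_one Hev). intros u Hu. apply Hroot in Hu.
    rewrite (ev_imp Hev), (ev_mul Hev), cm_box_vw by lia. apply fl_imp_eq_one, fl_le_refl.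
Qed.

End Countermodel.

Lemma pcp_solution_not_entails_w4K (K : FLew -> Prop)
  (Hlin : forall A, K A -> linearly_ordered A)
  (Hnc : forall n : nat, exists A, K A /\ ~ n_contractive A n)
  (s : nat) (Hs : 1 <= s) (P : list (nat * nat))
  (y v w : nat) (Hyv : y <> v) (Hyw : y <> w) (Hvw : v <> w) :
  pcp_solution s P -> ~ entails_w4K K (gammaP s P y v w) (FBox (phiP y v w)).
Proof.
  intros (idx & Hne & Hidx & Hsol) Hent. change (pcp_top s P idx = pcp_bot s P idx) in Hsol.
  assert (HL : 1 <= length idx)
    by (destruct (length idx) eqn:E; [apply length_zero_iff_nil in E; contradiction | lia]).
  destruct (Hnc (pcp_top s P idx + pcp_top s P idx)) as (A & HA & Hnc_A).
  apply Hnc_A. intro c. apply (phi_value_pow_diag c _ (Hlin A HA)).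
  pose proof (cm_is_eval c s P idx y v w) as Hev.
  pose proof (Hent A HA _ _ _ _ (inhabits (chain_pt _ 0)) (chain_finite _) (chain_rel_trans _) Hev
                _ (cm_gammaP c s P idx y v w Hyv Hyw Hvw Hs Hidx Hne)) as Hbox.
  rewrite Hsol at 2. rewrite <- (cm_phiP c s P idx y v w Hyv Hyw Hvw).
  apply (ev_box_eq_one_succ Hev _ _ _ Hbox).
  apply chain_rel_spec. rewrite !chain_pt_val by lia. lia.
Qed.

(** * From a countermodel to a solution *)

Section Descent.
Context {A : FLew} {W : Type} (R : W -> W -> Prop) (D : W -> Prop).
Hypothesis HD : forall u u', D u -> R u u' -> D u'.
Context (a b boxa boxb boxab : W -> A).
Hypothesis Hboxa : forall u, D u -> is_inf A (fun z => exists u', R u u' /\ z = a u') (boxa u).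
Hypothesis Hboxb : forall u, D u -> is_inf A (fun z => exists u', R u u' /\ z = b u') (boxb u).
Hypothesis Hboxab :
  forall u, D u -> is_inf A (fun z => exists u', R u u' /\ z = a u' ⊗ b u') (boxab u).
Hypothesis Hbox_mul : forall u, D u -> boxab u ⊑ boxa u ⊗ boxb u.
Context (c : A) (s : nat) (P : list (nat * nat)).
Hypothesis Hs : 1 <= s.
Hypothesis Hpairs : forall i, i < length P -> 1 <= pcp_v P i + pcp_w P i.
Hypothesis Hstep : forall u, D u -> exists i, i < length P /\
  a u = boxa u ^^ s ^ ndigits s (pcp_v P i) ⊗ c ^^ pcp_v P i /\
  b u = boxb u ^^ s ^ ndigits s (pcp_w P i) ⊗ c ^^ pcp_w P i.

Definition coded (u : W) (idx : list nat) : Prop :=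
  idx <> [] /\ Forall (fun i => i < length P) idx /\
  a u = c ^^ pcp_top s P idx /\ b u = c ^^ pcp_bot s P idx.

Lemma coded_mul u idx : coded u idx -> a u ⊗ b u = c ^^ (pcp_top s P idx + pcp_bot s P idx).
Proof. intros (_ & _ & -> & ->). symmetry. apply fl_pow_add. Qed.

Lemma descent_box_not_le u M : D u -> ~ a u ⊗ b u ⊑ c ^^ S M -> ~ boxa u ⊗ boxb u ⊑ c ^^ M.
Proof.
  intros Hu Hn Hle. apply Hn. destruct (Hstep u Hu) as (i & Hi & -> & ->).
  assert (Hpow : forall k, 1 <= s ^ k) by (intro k; pose proof (Nat.pow_nonzero s k); lia).
  apply (fl_le_trans _ (boxa u ⊗ c ^^ pcp_v P i ⊗ (boxb u ⊗ c ^^ pcp_w P i))).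
  { apply fl_mul_mono; apply fl_mul_monol, fl_pow_le_base, Hpow. }
  replace (S M) with (M + 1) by lia. rewrite fl_mulACA, <- fl_pow_add, (fl_pow_add c M 1).
  apply fl_mul_mono; [exact Hle | apply fl_pow_antitone, Hpairs, Hi].
Qed.

Lemma descent_leaf u : D u -> (forall u', ~ R u u') -> exists idx, coded u idx.
Proof.
  intros Hu Hno. destruct (Hstep u Hu) as (i & Hi & Ha & Hb).
  assert (Hone : forall val box, is_inf A (fun z => exists u', R u u' /\ z = val u') box -> box = c ^^ 0).
  { intros val box Hinf. apply (is_inf_eq_one _ _ Hinf). intros z (u' & Hr & _). destruct (Hno u' Hr). }
  exists [i]. split; [discriminate|]. split; [constructor; auto|].
  rewrite Ha, Hb, (Hone _ _ (Hboxa u Hu)), (Hone _ _ (Hboxb u Hu)).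
  split; apply fl_pow_nconcat.
Qed.

Lemma descent_inf_exponent u M (val : W -> A) (f : list nat -> nat) x :
  (exists u', R u u') ->
  (forall u', R u u' -> exists idx, coded u' idx /\ pcp_top s P idx + pcp_bot s P idx < M) ->
  (forall idx, f idx <= pcp_top s P idx + pcp_bot s P idx) ->
  (forall u' idx, coded u' idx -> val u' = c ^^ f idx) ->
  is_inf A (fun z => exists u', R u u' /\ z = val u') x ->
  exists idx0, (exists u0, R u u0 /\ coded u0 idx0 /\ pcp_top s P idx0 + pcp_bot s P idx0 < M) /\
    (forall u' idx, R u u' -> coded u' idx -> pcp_top s P idx + pcp_bot s P idx < M -> f idx <= f idx0) /\
    x = c ^^ f idx0.
Proof.
  intros [u1 Hr1] Hsucc Hf Hval Hinf.
  set (E := fun k => exists u' idx, R u u' /\ coded u' idx /\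
                     pcp_top s P idx + pcp_bot s P idx < M /\ k = f idx).
  destruct (is_inf_pow_greatest c E M (fun z => exists u', R u u' /\ z = val u') x)
    as (k & (u0 & idx0 & Hr0 & Hc0 & Hlt0 & ->) & Hmax & Ex);
    [| | | exact Hinf |].
  - destruct (Hsucc u1 Hr1) as (idx & Hc & Hlt). exists (f idx), u1, idx. auto.
  - intros k (u' & idx & _ & _ & Hlt & ->). specialize (Hf idx). lia.
  - intro z. split.
    + intros (u' & Hr & ->). destruct (Hsucc u' Hr) as (idx & Hc & Hlt).
      exists (f idx). split; [exists u', idx; auto | apply Hval, Hc].
    + intros (k & (u' & idx & Hr & Hc & _ & ->) & ->).
      exists u'. split; [exact Hr|]. symmetry. apply Hval, Hc.
  - exists idx0. split; [eauto|]. split; [|exact Ex].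
    intros u' idx Hr Hc Hlt. apply Hmax. exists u', idx. auto.
Qed.

Context (N : nat).
Hypothesis HN : forall i j, i < N -> j < N -> c ^^ i ⊑ c ^^ j -> j <= i.

(* The successor maximising [top + bot] maximises [top] and [bot] separately: the infimum of
   the products is at most the product of the infima, and powers of [c] below [N] are distinct. *)
Lemma descent_node u M :
  D u -> M <= N -> (exists u', R u u') ->
  (forall u', R u u' -> exists idx, coded u' idx /\ pcp_top s P idx + pcp_bot s P idx < M) ->
  ~ boxa u ⊗ boxb u ⊑ c ^^ M -> exists idx, coded u idx.
Proof.
  intros Hu HM Hex Hsucc Hn.
  destruct (descent_inf_exponent u M a (pcp_top s P) (boxa u) Hex Hsucc) as (idx1 & _ & Hmax1 & E1);
    [lia | intros ? ? (_ & _ & -> & _); reflexivity | apply Hboxa, Hu |].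
  destruct (descent_inf_exponent u M b (pcp_bot s P) (boxb u) Hex Hsucc) as (idx2 & _ & Hmax2 & E2);
    [lia | intros ? ? (_ & _ & _ & ->); reflexivity | apply Hboxb, Hu |].
  destruct (descent_inf_exponent u M (fun u' => a u' ⊗ b u')
              (fun idx => pcp_top s P idx + pcp_bot s P idx) (boxab u) Hex Hsucc)
    as (idxs & (us & Hrs & Hcs & Hlts) & _ & Es); [lia | exact coded_mul | apply Hboxab, Hu |].
  cbv beta in Es.
  assert (Hk1 : pcp_top s P idxs <= pcp_top s P idx1) by (apply (Hmax1 us); assumption).
  assert (Hk2 : pcp_bot s P idxs <= pcp_bot s P idx2) by (apply (Hmax2 us); assumption).
  assert (Hk12 : pcp_top s P idx1 + pcp_bot s P idx2 < M).
  { apply Nat.nle_gt. intro Hge. apply Hn. rewrite E1, E2, <- fl_pow_add. apply fl_pow_antitone, Hge. }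
  assert (Hks : pcp_top s P idx1 + pcp_bot s P idx2 <= pcp_top s P idxs + pcp_bot s P idxs).
  { apply HN; [lia | lia |]. rewrite <- Es, fl_pow_add, <- E1, <- E2. apply Hbox_mul, Hu. }
  destruct (Hstep u Hu) as (i & Hi & Ha & Hb). destruct Hcs as (Hne & Hidx & _ & _).
  exists (idxs ++ [i]). split; [destruct idxs; [contradiction | discriminate]|].
  split; [apply Forall_app; auto|].
  rewrite Ha, Hb, E1, E2, pcp_top_snoc, pcp_bot_snoc.
  replace (pcp_top s P idx1) with (pcp_top s P idxs) by lia.
  replace (pcp_bot s P idx2) with (pcp_bot s P idxs) by lia.
  split; apply fl_pow_nconcat.
Qed.

Lemma descent M : M <= N -> forall u, D u -> ~ a u ⊗ b u ⊑ c ^^ M -> exists idx, coded u idx.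
Proof.
  induction M as [|M IH]; intros HM u Hu Hn; [destruct (Hn (fl_le_one _))|].
  pose proof (descent_box_not_le u M Hu Hn) as Hbox.
  destruct (classic (exists u', R u u')) as [Hex | Hno].
  - apply (descent_node u M); [exact Hu | lia | exact Hex | | exact Hbox].
    intros u' Hr.
    assert (Hn' : ~ a u' ⊗ b u' ⊑ c ^^ M).
    { intro Hle. apply Hbox. refine (fl_le_trans _ _ _ _ Hle).
      apply fl_mul_mono; [apply (is_inf_lb _ _ _ (Hboxa u Hu)) | apply (is_inf_lb _ _ _ (Hboxb u Hu))];
        eauto. }
    destruct (IH ltac:(lia) u' (HD u u' Hu Hr) Hn') as (idx & Hc).
    exists idx. split; [exact Hc|]. apply Nat.nle_gt. intro Hge.
    apply Hn'. rewrite (coded_mul _ _ Hc). apply fl_pow_antitone, Hge.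
  - apply descent_leaf; [exact Hu|]. intros u' Hr. eauto.
Qed.

End Descent.

Lemma weakly_archimedean_pow_strict {A : FLew} (x c : A) :
  weakly_archimedean A -> ~ x ⊑ x ⊗ c ->
  exists N, ~ x ⊑ c ^^ N /\ forall i j, i < N -> j < N -> c ^^ i ⊑ c ^^ j -> j <= i.
Proof.
  intros Hwa Hx.
  assert (Hex : exists n, ~ x ⊑ c ^^ n).
  { apply not_all_ex_not. intro Hall. apply Hx. rewrite (Hwa x c Hall). apply fl_le_refl. }
  destruct (dec_inh_nat_subset_has_unique_least_element _ (fun n => classic _) Hex)
    as (N & (HN & Hmin) & _).
  exists N. split; [exact HN|]. intros i j Hi Hj Hle. apply Nat.nlt_ge. intro Hij.
  assert (Hstab : c ^^ S i = c ^^ i).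
  { apply fl_le_antisym; [apply fl_pow_antitone; lia|].
    exact (fl_le_trans _ _ _ Hle (fl_pow_antitone _ _ _ Hij)). }
  apply HN. rewrite (fl_pow_stable c i N Hstab), <- (fl_pow_stable c i (N - 1) Hstab) by lia.
  apply NNPP. intro H. specialize (Hmin _ H). lia.
Qed.

Lemma no_solution_entails_4K (K : FLew -> Prop)
  (HK : forall A, K A -> weakly_archimedean A /\ linearly_ordered A)
  (s : nat) (Hs : 1 <= s) (P : list (nat * nat)) (y v w : nat) :
  ~ pcp_solution s P -> entails_4K K (gammaP s P y v w) (FBox (phiP y v w)).
Proof.
  intros Hns A HA W R e ev _ Htr Hev r HG. destruct (HK A HA) as [Hwa Hlin].
  apply (ev_box_eq_one Hev). intros u0 Hr0. apply NNPP. intro Hphi.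
  set (c := ev r (FBox (FVar y))).
  pose proof (gammaP_y_const Hev r s P y v w HG) as Hy. fold c in Hy.
  rewrite (ev_phiP Hev), (Hy u0 Hr0) in Hphi.
  assert (Hab : ~ ev u0 (FVar v) ⊗ ev u0 (FVar w) ⊑ ev u0 (FVar v) ⊗ ev u0 (FVar w) ⊗ c)
    by (intro H; apply Hphi, phi_value_one_of_le, H).
  assert (Hnt : zero A <> one A).
  { intro E. apply Hab, (fl_le_trans _ (one A)); [apply fl_le_one | rewrite <- E; apply fl_zero_le]. }
  destruct (weakly_archimedean_pow_strict _ c Hwa Hab) as (N & HN & Hstrict).
  destruct (descent R (R r) (fun u u' => Htr r u u')
              (fun u => ev u (FVar v)) (fun u => ev u (FVar w))
              (fun u => ev u (FBox (FVar v))) (fun u => ev u (FBox (FVar w)))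
              (fun u => ev u (FBox (FMul (FVar v) (FVar w))))
              (fun u _ => ev_box Hev u _) (fun u _ => ev_box Hev u _))
    with (c := c) (s := s) (P := P) (N := N) (M := N) (u := u0) as (idx & Hne & Hidx & Ea & Eb);
    auto.
  - intros u _. eapply is_inf_ext; [|apply (ev_box Hev)].
    intro z. split; intros (u' & Hr & ->); exists u'; rewrite (ev_mul Hev); auto.
  - exact (gammaP_box_mul Hev r s P y v w HG).
  - intros i Hi. apply Nat.neq_0_lt_0. intro H0. exact (Hns (pcp_solution_of_empty_pair s P i Hi H0)).
  - intros u Hu. rewrite <- (Hy u Hu). exact (gammaP_step Hev r s P y v w HG u Hlin Hnt Hu).
  - destruct (Nat.eq_dec (pcp_top s P idx) (pcp_bot s P idx)) as [Hsol | Hneq].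
    + apply Hns. exists idx. auto.
    + apply Hphi. rewrite Ea, Eb. apply phi_value_pow_neq, Hneq.
Qed.

Lemma entails_4K_w4K (K : FLew -> Prop) (Gamma : list form) (phi : form) :
  entails_4K K Gamma phi -> entails_w4K K Gamma phi.
Proof. intros H A HA W R e ev Hinh _. exact (H A HA W R e ev Hinh). Qed.

Theorem proposition3p9 (K : FLew -> Prop)
  (HK : forall A, K A -> weakly_archimedean A /\ linearly_ordered A)
  (Hnc : forall n : nat, exists A, K A /\ ~ n_contractive A n)
  (s : nat) (Hs : 2 <= s) (P : list (nat * nat)) (HP : NoDup P)
  (y v w : nat) (Hyv : y <> v) (Hyw : y <> w) (Hvw : v <> w) :
  (pcp_solution s P <-> ~ entails_4K K (gammaP s P y v w) (FBox (phiP y v w))) /\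
  (pcp_solution s P <-> ~ entails_w4K K (gammaP s P y v w) (FBox (phiP y v w))).
Proof.
  pose proof (pcp_solution_not_entails_w4K K (fun A HA => proj2 (HK A HA)) Hnc s ltac:(lia) P
                y v w Hyv Hyw Hvw) as Hcounter.
  pose proof (no_solution_entails_4K K HK s ltac:(lia) P y v w) as Hvalid.
  pose proof (entails_4K_w4K K (gammaP s P y v w) (FBox (phiP y v w))) as Hfinite.
  split; split.
  - intros Hsol H4K. exact (Hcounter Hsol (Hfinite H4K)).
  - intro Hn. apply NNPP. intro Hns. exact (Hn (Hvalid Hns)).
  - exact Hcounter.
  - intro Hn. apply NNPP. intro Hns. exact (Hn (Hfinite (Hvalid Hns))).
Qed.
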